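(* Let $\mathbf A\in\mathbb R^{m\times n}$ with $0<m<n$ and suppose there is $\Delta>0$ such that $\|\mathbf h\|_1\ge\sqrt{m/\Delta}\,\|\mathbf h\|_2$ for all nonzero $\mathbf h\in\mathrm{Null}(\mathbf A)$. Fix $c>0$ and $\alpha>0$. If $$m\ge\Big(2+\frac{c}{\alpha}\Big)^2k\Delta,$$ then $\big(1+\frac{c}{\alpha}\big)\|\mathbf h_{\mathcal S}\|_1\le\|\mathbf h_{\mathcal S^c}\|_1$ holds for all $\mathbf h\in\mathrm{Null}(\mathbf A)$ and all coordinate sets $\mathcal S$ with $|\mathcal S|\le k$. Consequently, every $k$-sparse $\mathbf x^0$ with $\|\mathbf x^0\|_\infty=c$ is the unique minimizer of problem (P2) with $\mathbf b=\mathbf A\mathbf x^0$.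
   Context: Problem (P2) is $\min_{\mathbf x}\{\|\mathbf x\|_1+\frac{1}{2\alpha}\|\mathbf x\|_2^2:\ \mathbf A\mathbf x=\mathbf b\}$. A vector is $k$-sparse if it has at most $k$ nonzero entries. $\mathbf h_{\mathcal S}$ is the restriction of $\mathbf h$ to coordinates in $\mathcal S$, $\mathcal S^c$ its complement in $\{1,\dots,n\}$. *)

(* the reals are an arbitrary real closed field R : rcfType
   (the statement is purely order-algebraic, needs only square roots). *)
From HB Require Import structures.
From mathcomp Require Import all_boot all_order all_algebra.
Set Implicit Arguments. Unset Strict Implicit. Unset Printing Implicit Defensive.
Import Order.TTheory GRing.Theory Num.Theory.
Local Open Scope ring_scope.

Section Defs.
Variable R : rcfType.

Definition norm1 n (x : 'cV[R]_n) : R := \sum_(i < n) `|x i 0|.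
Definition norm2 n (x : 'cV[R]_n) : R := Num.sqrt (\sum_(i < n) (x i 0) ^+ 2).
Definition normInf n (x : 'cV[R]_n) : R := \big[Num.max/0]_(i < n) `|x i 0|.

Definition restr n (S : {set 'I_n}) (h : 'cV[R]_n) : 'cV[R]_n :=
  \col_i (if i \in S then h i 0 else 0).

Definition inNull m n (A : 'M[R]_(m, n)) (h : 'cV[R]_n) : Prop := A *m h = 0.

Definition ksparse n (k : nat) (x : 'cV[R]_n) : Prop :=
  (#|[set i : 'I_n | x i ord0 != 0%R]| <= k)%N.

Definition P2obj n (alpha : R) (x : 'cV[R]_n) : R :=
  norm1 x + (2 * alpha)^-1 * (norm2 x) ^+ 2.

Definition P2_unique_minimizer m n (A : 'M[R]_(m, n)) (b : 'cV[R]_m)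
    (alpha : R) (x : 'cV[R]_n) : Prop :=
  A *m x = b /\
  forall y : 'cV[R]_n, A *m y = b -> y <> x -> P2obj alpha x < P2obj alpha y.

End Defs.

From HB Require Import structures.
From mathcomp Require Import all_boot all_order all_algebra.
From mathcomp Require Import lra ring.
Set Implicit Arguments. Unset Strict Implicit. Unset Printing Implicit Defensive.
Import Order.TTheory GRing.Theory Num.Theory.
Local Open Scope ring_scope.

(* For h in Null(A) and |S| <= k, Cauchy-Schwarz
   gives ||h_S||_1 <= sqrt|S| ||h||_2, and the hypothesis on Null(A) gives
   sqrt(m/Delta) ||h||_2 <= ||h||_1.  Since (2 + c/alpha)^2 k <= m/Delta, this
   yields (2 + c/alpha) ||h_S||_1 <= ||h||_1 = ||h_S||_1 + ||h_S^c||_1.  Let S be the support of x0 and y = x0 + h with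
   h in Null(A), h <> 0.  Coordinatewise, using |x0_i| <= c, the objective of
   (P2) grows by at least |h_i| off S and by at least -(1 + c/alpha)|h_i| on S,
   plus (2 alpha)^-1 h_i^2 everywhere.  Summing, the increase is at least
   ||h_S^c||_1 - (1 + c/alpha)||h_S||_1 + (2 alpha)^-1 ||h||_2^2 > 0 by Part 1.
   The file first proves facts on the norms and restrictions, then the general
   null-space-property lemma, then the objective-gain estimate and the general
   "null space property implies unique minimizer" lemma; the theorem combines them. *)

Section Norms.
Variables (R : rcfType) (n : nat).
Implicit Types (h : 'cV[R]_n) (S : {set 'I_n}).

Lemma norm1_ge0 h : 0 <= norm1 h.
Proof. by apply: sumr_ge0 => i _. Qed.

Lemma norm1_0 : norm1 (0 : 'cV[R]_n) = 0.
Proof. by rewrite /norm1 big1 // => i _; rewrite mxE normr0. Qed.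

Lemma norm1_restr_split S h :
  norm1 h = norm1 (restr S h) + norm1 (restr (~: S) h).
Proof.
rewrite /norm1 -big_split; apply: eq_bigr => i _ /=.
by rewrite !mxE in_setC; case: (i \in S); rewrite normr0 ?addr0 ?add0r.
Qed.

Lemma norm2_sqr h : norm2 h ^+ 2 = \sum_(i < n) (h i 0) ^+ 2.
Proof. by rewrite /norm2 sqr_sqrtr //; apply: sumr_ge0 => i _; rewrite sqr_ge0. Qed.

Lemma norm2_0 : norm2 (0 : 'cV[R]_n) = 0.
Proof.
by rewrite /norm2 big1 ?sqrtr0 // => i _; rewrite mxE expr0n.
Qed.

Lemma norm2_sqr_gt0 h : h != 0 -> 0 < norm2 h ^+ 2.
Proof.
move=> hn0; rewrite norm2_sqr.
have [i hi] : exists i, h i 0 != 0.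
  apply/existsP; apply: contraR hn0 => /existsPn hall.
  by apply/eqP/matrixP => i j; rewrite ord1 mxE; apply/eqP; rewrite -[_ == _]negbK.
rewrite (bigD1 i) //= ltr_pwDl ?lt_def ?sqrf_eq0 ?hi ?sqr_ge0 //.
by apply: sumr_ge0 => j _; rewrite sqr_ge0.
Qed.

(* Cauchy-Schwarz on a support: ||h_S||_1^2 <= |S| ||h||_2^2.  With
   K = |S| and t = ||h_S||_1 / K, sum 2 t |h_i| <= h_i^2 + t^2 over i in S. *)
Lemma norm1_restr_sqr_le S h :
  norm1 (restr S h) ^+ 2 <= #|S|%:R * norm2 h ^+ 2.
Proof.
rewrite norm2_sqr; set s := norm1 (restr S h); set Q := \sum_(i < n) _.
have Q0 : 0 <= Q by apply: sumr_ge0 => i _; rewrite sqr_ge0.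
have [S0|Spos] := posnP #|S|.
  have -> : s = 0.
    rewrite /s /norm1 big1 // => i _; move/eqP: S0; rewrite cards_eq0 => /eqP ->.
    by rewrite mxE in_set0 normr0.
  by rewrite expr0n S0 mul0r.
set K : R := #|S|%:R; have K0 : 0 < K by rewrite ltr0n.
set t := s / K; have st : s = K * t by rewrite /t mulrC divfK // gt_eqF.
have key : 2 * t * s <= Q + K * t ^+ 2.
  rewrite {1}/s /norm1 mulr_sumr.
  have -> : K * t ^+ 2 = \sum_(i < n) (if i \in S then t ^+ 2 else 0).
    by rewrite -big_mkcond /= sumr_const /K mulr_natl.
  rewrite -big_split /=; apply: ler_sum => i _; rewrite mxE.
  case: (i \in S); last by rewrite normr0 mulr0 addr0 sqr_ge0.
  have := sqr_ge0 (`|h i 0| - t); rewrite -(real_normK (num_real (h i 0))); nra.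
have Kt2Q : K * t ^+ 2 <= Q by nra.
rewrite st; nra.
Qed.

End Norms.

Lemma restr_norm1_le_of_ratio (R : rcfType) n (M D : R) (S : {set 'I_n})
    (h : 'cV[R]_n) :
  0 <= D -> D ^+ 2 * #|S|%:R <= M -> Num.sqrt M * norm2 h <= norm1 h ->
  D * norm1 (restr S h) <= norm1 h.
Proof.
move=> D0 DSM ratio; apply: le_trans ratio.
have M0 : 0 <= M by apply: le_trans DSM; rewrite mulr_ge0 ?sqr_ge0.
have lhs0 : 0 <= D * norm1 (restr S h) by rewrite mulr_ge0 ?norm1_ge0.
have rhs0 : 0 <= Num.sqrt M * norm2 h by rewrite mulr_ge0 ?sqrtr_ge0.
rewrite -(ler_pXn2r (isT : (0 < 2)%N)) ?nnegrE // !exprMn sqr_sqrtr //.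
apply: (le_trans (ler_wpM2l (sqr_ge0 D) (norm1_restr_sqr_le S h))).
by rewrite mulrA ler_wpM2r // sqr_ge0.
Qed.

Lemma null_space_property (R : rcfType) (m n k : nat) (A : 'M[R]_(m, n))
    (Delta c alpha : R) :
  0 < Delta ->
  (forall h : 'cV[R]_n, inNull A h -> h != 0 ->
      Num.sqrt (m%:R / Delta) * norm2 h <= norm1 h) ->
  0 < c -> 0 < alpha ->
  (2 + c / alpha) ^+ 2 * k%:R * Delta <= m%:R ->
  forall (h : 'cV[R]_n) (S : {set 'I_n}), inNull A h -> (#|S| <= k)%N ->
    (1 + c / alpha) * norm1 (restr S h) <= norm1 (restr (~: S) h).
Proof.
move=> hDelta hnull hc halpha hmk h S hN hS.
have ca : 0 < c / alpha by rewrite divr_gt0.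
have ratio : Num.sqrt (m%:R / Delta) * norm2 h <= norm1 h.
  have [->|hn0] := eqVneq h 0; last exact: hnull.
  by rewrite norm2_0 norm1_0 mulr0.
have DSM : (2 + c / alpha) ^+ 2 * #|S|%:R <= m%:R / Delta.
  rewrite ler_pdivlMr //; apply: le_trans hmk.
  have D0 : 0 < (2 + c / alpha) ^+ 2 by rewrite exprn_gt0 //; lra.
  by rewrite ler_pM2r // ler_pM2l // ler_nat.
have := restr_norm1_le_of_ratio (ltW _) DSM ratio.
have := norm1_ge0 (restr S h); rewrite (norm1_restr_split S h); lra.
Qed.

Definition supp (R : rcfType) n (x : 'cV[R]_n) : {set 'I_n} :=
  [set i : 'I_n | x i ord0 != 0].

Lemma coord_gain (R : rcfType) (alpha c a b : R) :
  0 < alpha -> `|a| <= c ->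
  (if a == 0 then `|b| else - ((1 + c / alpha) * `|b|)) + (2 * alpha)^-1 * b ^+ 2
  <= `|a + b| - `|a| + (2 * alpha)^-1 * ((a + b) ^+ 2 - a ^+ 2).
Proof.
move=> halpha ac.
have sq : (2 * alpha)^-1 * ((a + b) ^+ 2 - a ^+ 2)
          = alpha^-1 * (a * b) + (2 * alpha)^-1 * b ^+ 2.
  by field; rewrite gt_eqF.
rewrite sq; case: eqP => [->|_]; first by rewrite add0r normr0 mul0r; lra.
have tri : `|a| - `|b| <= `|a + b| by exact: lerB_normD.
have ab : - (c * `|b|) <= a * b.
  have : - (a * b) <= `|a| * `|b| by rewrite -normrM -normrN ler_norm.
  by have := ler_wpM2r (normr_ge0 b) ac; lra.
have abi : - (c / alpha * `|b|) <= alpha^-1 * (a * b).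
  have -> : - (c / alpha * `|b|) = alpha^-1 * - (c * `|b|) by ring.
  by apply: ler_wpM2l ab; rewrite invr_ge0 ltW.
lra.
Qed.

Lemma P2obj_gain (R : rcfType) n (alpha c : R) (x h : 'cV[R]_n) :
  0 < alpha -> (forall i, `|x i 0| <= c) ->
  norm1 (restr (~: supp x) h) - (1 + c / alpha) * norm1 (restr (supp x) h)
    + (2 * alpha)^-1 * norm2 h ^+ 2
  <= P2obj alpha (x + h) - P2obj alpha x.
Proof.
move=> halpha xc; rewrite /P2obj !norm2_sqr.
set w := (2 * alpha)^-1.
have split_supp i : (if x i 0 == 0 then `|h i 0| else - ((1 + c / alpha) * `|h i 0|))
    = `|restr (~: supp x) h i 0| - (1 + c / alpha) * `|restr (supp x) h i 0|.
  rewrite !mxE in_setC inE.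
  by case: eqP => _ /=; rewrite normr0 ?mulr0 ?subr0 ?add0r.
have -> : norm1 (restr (~: supp x) h) - (1 + c / alpha) * norm1 (restr (supp x) h)
          + w * \sum_(i < n) h i 0 ^+ 2
        = \sum_(i < n) ((if x i 0 == 0 then `|h i 0|
                         else - ((1 + c / alpha) * `|h i 0|)) + w * h i 0 ^+ 2).
  under [in RHS]eq_bigr do rewrite split_supp.
  by rewrite !big_split /= sumrN -!mulr_sumr.
have -> : norm1 (x + h) + w * \sum_(i < n) (x + h) i 0 ^+ 2
          - (norm1 x + w * \sum_(i < n) x i 0 ^+ 2)
        = \sum_(i < n) (`|x i 0 + h i 0| - `|x i 0|
                        + w * ((x i 0 + h i 0) ^+ 2 - x i 0 ^+ 2)).
  have addE i : x i 0 + h i 0 = (x + h) i 0 by rewrite mxE.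
  under [in RHS]eq_bigr do rewrite addE.
  rewrite !big_split /= !sumrN -mulr_sumr big_split /= sumrN /norm1; ring.
by apply: ler_sum => i _; apply: coord_gain.
Qed.

Lemma nsp_unique_minimizer (R : rcfType) m n (A : 'M[R]_(m, n)) (alpha c : R)
    (x : 'cV[R]_n) :
  0 < alpha -> (forall i, `|x i 0| <= c) ->
  (forall h : 'cV[R]_n, inNull A h ->
     (1 + c / alpha) * norm1 (restr (supp x) h) <= norm1 (restr (~: supp x) h)) ->
  P2_unique_minimizer A (A *m x) alpha x.
Proof.
move=> halpha xc nsp; split=> // y hy yx.
have hN : inNull A (y - x) by rewrite /inNull mulmxBr hy subrr.
have hn0 : y - x != 0 by rewrite subr_eq0; apply/eqP.
have gain := P2obj_gain (y - x) halpha xc.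
have xyx : x + (y - x) = y by rewrite addrC subrK.
rewrite xyx in gain.
have quad : 0 < (2 * alpha)^-1 * norm2 (y - x) ^+ 2.
  by rewrite mulr_gt0 ?norm2_sqr_gt0 // invr_gt0 mulr_gt0.
by have := nsp _ hN; lra.
Qed.

Theorem mainTheorem5 (R : rcfType) (m n k : nat) (A : 'M[R]_(m, n))
  (Delta c alpha : R)
  (hm : (0 < m)%N) (hmn : (m < n)%N) (hDelta : 0 < Delta)
  (hnull : forall h : 'cV[R]_n, inNull A h -> h != 0 ->
      Num.sqrt (m%:R / Delta) * norm2 h <= norm1 h)
  (hc : 0 < c) (halpha : 0 < alpha)
  (hmk : (2 + c / alpha) ^+ 2 * k%:R * Delta <= m%:R) :
  (forall (h : 'cV[R]_n) (S : {set 'I_n}), inNull A h -> (#|S| <= k)%N ->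
      (1 + c / alpha) * norm1 (restr S h) <= norm1 (restr (~: S) h))
  /\
  (forall x0 : 'cV[R]_n, ksparse k x0 -> normInf x0 = c ->
      P2_unique_minimizer A (A *m x0) alpha x0).
Proof.
have nsp := null_space_property hDelta hnull hc halpha hmk.
split=> // x0 hsparse hinf.
have entries_le_c i : `|x0 i 0| <= c by rewrite -hinf; apply: le_bigmax.
apply: (nsp_unique_minimizer (c := c)) => // h hN.
exact: nsp h _ hN hsparse.
Qed.
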